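(* Fix integers $N\ge 2$ and $K\ge 1$. The class $M^{\text{RESCAL}}_N$ is universal, i.e. $\pi(\mathcal{M}^{\text{RESCAL}}_N)=\pi(\mathbb{R}^{N\times N\times K})$.
   Context: There are $N$ entities and $K$ relations. A score-based model assigns a score $s_k(i,j)\in\mathbb{R}$ to each triple, $i,j\in\{1,\dots,N\}$, $k\in\{1,\dots,K\}$; its scoring tensor $\mathcal{S}\in\mathbb{R}^{N\times N\times K}$ has frontal slices $\mathbf{S}_k$ with $[\mathbf{S}_k]_{ij}=s_k(i,j)$. For a real $N\times N$ matrix $\mathbf{S}$, $\pi(\mathbf{S})$ is the matrix of dense ranks: $\pi_{ij}(\mathbf{S})=1+$ (number of distinct values among entries of $\mathbf{S}$ strictly larger than $s_{ij}$). For tensors, $\pi$ acts slicewise; for a set $X$, $\pi(X)=\{\pi(x):x\in X\}$. RESCAL of size $r$: parameters $\mathbf{A}\in\mathbb{R}^{N\times r}$ (rows $\mathbf{a}_i$), $\mathbf{R}_1,\dots,\mathbf{R}_K\in\mathbb{R}^{r\times r}$, score $\mathbf{a}_i^T\mathbf{R}_k\mathbf{a}_j$; $\mathcal{M}^{\text{RESCAL}}_r$ is the set of scoring tensors of all such models. *)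

From HB Require Import structures.
From mathcomp Require Import all_boot all_order all_algebra.
From mathcomp Require Import Rstruct.
From Stdlib Require Import Reals.
Set Implicit Arguments. Unset Strict Implicit. Unset Printing Implicit Defensive.
Import Order.TTheory GRing.Theory Num.Theory.
Local Open Scope ring_scope.

Definition dense_rank (N : nat) (S : 'M[R]_N) : 'M[nat]_N :=
  \matrix_(i, j)
    (size (undup [seq S p.1 p.2 | p <- enum (predT : pred ('I_N * 'I_N)) & S i j < S p.1 p.2])).+1%N.

Definition tensor (N K : nat) := {ffun 'I_K -> 'M[R]_N}.

Definition tensor_rank (N K : nat) (S : tensor N K) : {ffun 'I_K -> 'M[nat]_N} :=
  [ffun k => dense_rank (S k)].

(* Scoring tensor of the RESCAL model of size r with parameters A (rows a_i) and R_k: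
   [S_k]_ij = a_i^T R_k a_j = (A R_k A^T)_ij. *)
Definition rescal_tensor (N K r : nat) (A : 'M[R]_(N, r)) (Rk : 'I_K -> 'M[R]_r)
  : tensor N K :=
  [ffun k => A *m Rk k *m A^T].

Definition in_rescal (N K r : nat) (S : tensor N K) : Prop :=
  exists (A : 'M[R]_(N, r)) (Rk : 'I_K -> 'M[R]_r), S = rescal_tensor A Rk.

From HB Require Import structures.
From mathcomp Require Import all_boot all_order all_algebra.
From mathcomp Require Import Rstruct.
From Stdlib Require Import Reals.

Lemma rescal_tensor_id_mx (N K : nat) (S : tensor N K) :
  rescal_tensor ((scalar_mx 1)%R : 'M[R]_N) (fun k => S k) = S.
Proof. by apply/ffunP => k; rewrite ffunE trmx1 mul1mx mulmx1. Qed.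

Lemma in_rescal_full (N K : nat) (S : tensor N K) : in_rescal N S.
Proof. by exists (scalar_mx 1)%R, (fun k => S k); rewrite rescal_tensor_id_mx. Qed.

Theorem theorem5 (N K : nat) (hN : (2 <= N)%N) (hK : (1 <= K)%N) :
  forall T : {ffun 'I_K -> 'M[nat]_N},
    (exists S : tensor N K, in_rescal N S /\ tensor_rank S = T) <->
    (exists S : tensor N K, tensor_rank S = T).
Proof.
move=> T; split=> [[S [_ rankS]] | [S rankS]].
- by exists S.
- by exists S; split; [exact: in_rescal_full | exact: rankS].
Qed.
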